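(* Let $A$ be a finite alphabet with $k=|A|$. For all $u\in A^*$ and $n\in\mathbb{N}$ there exists some $v\in A^*$ with $v\lesssim_n u$ and $|v|\leq f_k(n)$.
   Context: For words $u,v$, $u\sqsubseteq v$ (subword) means $u=a_1\cdots a_\ell$ with letters $a_i$ and $v=v_0a_1v_1\cdots a_\ell v_\ell$ for some words $v_i$. For $n\in\mathbb{N}$, $u\sim_n v$ iff $u$ and $v$ have exactly the same subwords of length at most $n$, and $u\lesssim_n v$ iff $u\sim_n v$ and $u\sqsubseteq v$. The functions $f_k:\mathbb{N}\to\mathbb{N}$ ($k\geq1$) are defined by $f_1(n)=n$ and $f_{k+1}(n)=\max_{0\leq m\leq n}\bigl(m f_k(n+1-m)+m+f_k(n-m)\bigr)$. *)

From mathcomp Require Import all_boot.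
Set Implicit Arguments. Unset Strict Implicit. Unset Printing Implicit Defensive.

(* Words over an alphabet A are sequences [seq A]; the (scattered) subword
   relation u ⊑ v is MathComp's [subseq u v]. *)

Definition simn (A : eqType) (n : nat) (u v : seq A) : Prop :=
  forall w : seq A, size w <= n -> subseq w u = subseq w v.

Definition lesimn (A : eqType) (n : nat) (u v : seq A) : Prop :=
  simn n u v /\ subseq u v.

(* f_1(n) = n,
   f_{k+1}(n) = max_{0<=m<=n} (m f_k(n+1-m) + m + f_k(n-m)).
   Indexed so that [fk k] is f_{k+1}. *)
Fixpoint fk (k : nat) (n : nat) : nat :=
  match k with
  | 0 => n
  | k'.+1 => \max_(m < n.+1) (m * fk k' (n.+1 - m) + m + fk k' (n - m))
  end.

Definition f (k n : nat) : nat := fk k.-1 n.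

From mathcomp Require Import all_boot zify.
From Stdlib Require Import Classical.
Set Implicit Arguments. Unset Strict Implicit. Unset Printing Implicit Defensive.

(* Induction on the size k+1 of the alphabet B.  Factor u into B-arches
   (factors s a with a not in s and every letter of B in s a), taking c <= n
   arches, with c = n or a remainder missing some letter of B.  Replace each
   arch s a by s' a with s' ≲_{n-c+1} s over B \ {a}, and the remainder by a
   word ≲_{n-c} of it over a k-letter alphabet.  A subword of u of length at
   most n splits into a prefix of length at most n-c+1 read in the first arch
   and a rest of length at most n-1 read in the rest of u: if the prefix read
   in the first arch is longer, the rest has at most c-1 letters and is read
   in the remaining c-1 arches, and if it is empty, the first letter of the
   subword can be read in the first arch anyway.  The lengths add up to
   c f_k(n-c+1) + c + f_k(n-c) <= f_{k+1}(n). *)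

(* [f_ext] extends [f] to the empty alphabet by f_0 = 0. *)
Fixpoint f_ext (k n : nat) : nat :=
  match k with
  | 0 => 0
  | k'.+1 => \max_(m < n.+1) (m * f_ext k' (n.+1 - m) + m + f_ext k' (n - m))
  end.

Lemma f_ext_max k n m : m <= n ->
  m * f_ext k (n.+1 - m) + m + f_ext k (n - m) <= f_ext k.+1 n.
Proof.
rewrite -ltnS => mn.
exact: (@leq_bigmax _
  (fun i : 'I_n.+1 => i * f_ext k (n.+1 - i) + i + f_ext k (n - i)) (Ordinal mn)).
Qed.

Lemma f_ext_fk k n : f_ext k.+1 n = fk k n.
Proof.
elim: k n => [|k IHk] n.
  rewrite /=; apply/eqP; rewrite eqn_leq; apply/andP; split.
    by apply/bigmax_leqP => i _; rewrite muln0 !addn0 -ltnS ltn_ord.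
  by have := f_ext_max 0 (leqnn n); rewrite muln0 !addn0.
by apply: eq_bigr => i _; rewrite -!/(f_ext k.+1 _) !IHk.
Qed.

Section Subwords.
Variable T : eqType.
Implicit Types u v w s t : seq T.

Lemma lesimn_refl n u : lesimn n u u.
Proof. by split. Qed.

Lemma lesimn0 u : lesimn 0 [::] u.
Proof.
split; last exact: sub0seq.
by move=> w; rewrite leqn0 size_eq0 => /eqP ->; rewrite !sub0seq.
Qed.

Lemma lesimnP n v u : subseq v u ->
  (forall w, size w <= n -> subseq w u -> subseq w v) -> lesimn n v u.
Proof.
move=> vu uv; split=> // w szw; apply/idP/idP => [wv|]; last exact: uv.
exact: subseq_trans wv vu.
Qed.

Lemma subseq_cat_split s t w : subseq w (s ++ t) ->
  exists w0 w1, [/\ w = w0 ++ w1, subseq w0 s & subseq w1 t].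
Proof.
elim: s w => [|x s IHs] w wst; first by exists [::], w; rewrite sub0seq.
case: w wst => [|y w] /=; first by exists [::], [::]; rewrite sub0seq.
case: eqP => [->|_] /IHs [w0 [w1 [-> w0s w1t]]].
  by exists (x :: w0), w1; rewrite /= eqxx.
by exists w0, w1; split=> //; apply: subseq_trans w0s (subseq_cons _ _).
Qed.

Lemma simn_subseq_catl n s s' t w : simn n s' s -> size w <= n ->
  subseq w (s ++ t) -> subseq w (s' ++ t).
Proof.
move=> ss' szw /subseq_cat_split [w0 [w1 [Ew w0s w1t]]]; subst w.
rewrite cat_subseq // ss' //; apply: leq_trans szw.
by rewrite size_cat leq_addr.
Qed.

End Subwords.

Section Arches.
Variables (T : eqType) (B : seq T).
Implicit Types u s w : seq T.

Inductive arches : nat -> seq T -> Prop :=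
| arches0 u : arches 0 u
| archesS c s a u : a \notin s -> {subset B <= a :: s} -> arches c u ->
    arches c.+1 (s ++ a :: u).

Lemma arches_cat c u t : arches c u -> arches c (u ++ t).
Proof.
elim=> {c u} [u|c s a u aNs Bas _ IH]; first exact: arches0.
by rewrite -catA cat_cons; apply: archesS.
Qed.

Lemma arches1 u : u != [::] -> {subset B <= u} -> arches 1 u.
Proof.
elim/last_ind: u => // u x IHu _ Bux.
have Bxu : {subset B <= x :: u} by move=> b /Bux; rewrite mem_rcons.
case xu: (x \in u).
  rewrite -cats1; apply/arches_cat/IHu; first by apply: contraTneq xu => ->.
  by move=> b /Bxu; rewrite inE => /predU1P [->|].
by rewrite -cats1; apply: archesS; rewrite ?xu //; apply: arches0.
Qed.

Lemma arches_subseq c u w : arches c u -> {subset w <= B} -> size w <= c ->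
  subseq w u.
Proof.
move=> arch_u; elim: arch_u w => {c u} [u|c s a u _ Bas _ IH] [|z w] wB //=;
  rewrite ?sub0seq // ltnS => szw.
rewrite -cat_rcons -cat1s cat_subseq //.
  by rewrite sub1seq mem_rcons Bas // wB ?mem_head.
by apply: IH => // y wy; rewrite wB // inE wy orbT.
Qed.

Lemma arches_max u n :
  exists c, [/\ c <= n, arches c u & n - c = 0 \/ ~ arches c.+1 u].
Proof.
elim: n => [|n [c [cn arch_c [nc|cmax]]]].
- by exists 0; split=> //; [exact: arches0 | left].
- have Ecn : c = n by lia.
  subst c.
  have [arch_n1|Narch_n1] := classic (arches n.+1 u).
    by exists n.+1; split=> //; left; rewrite subnn.
  by exists n; split=> //; right.
- by exists c; split=> //; [exact: leqW | right].
Qed.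

(* The first letter of a word over B occurs in every B-arch, and any word of
   c letters of B is read in c arches. *)
Lemma arch_subseq_split c s a u2 q w : {subset B <= a :: s} -> arches c u2 ->
  {subset w <= B} -> size w <= c + q.+1 -> subseq w (s ++ a :: u2) ->
  exists x y, [/\ w = x ++ y, subseq x (rcons s a), size x <= q.+1,
                  subseq y u2 & size y <= c + q].
Proof.
move=> Bas arch_u2 wB szw; rewrite -cat_rcons.
case/subseq_cat_split=> [w0 [w1 [Ew w0s w1u2]]]; subst w; rewrite size_cat in szw.
have [long_w0|short_w0] := leqP q.+1 (size w0).
  exists (take q.+1 w0), (drop q.+1 w0 ++ w1); split.
  - by rewrite catA cat_take_drop.
  - exact: subseq_trans (take_subseq _ _) w0s.
  - by rewrite size_take; case: ltnP.
  - apply: arches_subseq arch_u2 _ _; last by rewrite size_cat size_drop; lia.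
    by move=> y /(mem_subseq (cat_subseq (drop_subseq w0 q.+1) (subseq_refl w1))) /wB.
  - by rewrite size_cat size_drop; lia.
have [short_w1|long_w1] := leqP (size w1) (c + q).
  by exists w0, w1; split=> //; apply: ltnW.
have -> : w0 = [::] by apply/eqP; rewrite -size_eq0; lia.
case: w1 => [|z y] in w1u2 wB szw long_w1 *; first by [].
exists [:: z], y; split=> //=.
- by rewrite sub1seq mem_rcons Bas // wB // mem_cat mem_head orbT.
- exact: subseq_trans (subseq_cons _ _) w1u2.
- by move: szw => /=; lia.
Qed.

End Arches.

Section Shortening.
Variables (T : eqType) (k : nat).
Hypothesis short_k : forall (B u : seq T) n, size B <= k -> {subset u <= B} ->
  exists2 v, lesimn n v u & size v <= f_ext k n.

Lemma size_rem_leq (B : seq T) b : size B <= k.+1 -> b \in B ->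
  size (rem b B) <= k.
Proof. by move=> szB bB; rewrite size_rem //; lia. Qed.

Lemma arches_short (B : seq T) q c u : size B <= k.+1 -> arches B c u ->
  {subset u <= B} -> q = 0 \/ ~ arches B c.+1 u ->
  exists2 v, lesimn (c + q) v u & size v <= c * f_ext k q.+1 + c + f_ext k q.
Proof.
move=> szB; elim=> {c u} [u|c s a u2 aNs Bas arch_u2 IHu2] uB maxc.
  rewrite mul0n !add0n; case: maxc => [->|Narch1].
    by exists [::]; [exact: lesimn0 | rewrite leq0n].
  have [->|uN] := eqVneq u [::]; first by exists [::]; [exact: lesimn_refl|].
  have /allPn [b bB bNu] : ~~ all (mem u) B.
    by apply/negP => /allP Bu; apply/Narch1/arches1.
  apply: (short_k (B := rem b B)); first exact: size_rem_leq.
  by move=> t tu; apply: rem_mem; [apply: contraNneq bNu => <- | apply: uB].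
have aB : a \in B by rewrite uB // mem_cat mem_head orbT.
have [s' s's szs'] : exists2 s', lesimn q.+1 s' s & size s' <= f_ext k q.+1.
  apply: (short_k (B := rem a B)); first exact: size_rem_leq.
  move=> t ts; apply: rem_mem; first by apply: contraNneq aNs => <-.
  by rewrite uB // mem_cat ts.
have [v2 v2u2 szv2] : exists2 v2, lesimn (c + q) v2 u2 &
    size v2 <= c * f_ext k q.+1 + c + f_ext k q.
  apply: IHu2; first by move=> t tu2; rewrite uB // mem_cat inE tu2 !orbT.
  by case: maxc => [|Narch]; [left | right => /(archesS aNs Bas)].
exists (s' ++ a :: v2); last by rewrite size_cat /= mulSn; lia.
apply: lesimnP => [|w szw wu].
  rewrite -!cat_rcons; apply: cat_subseq v2u2.2.
  by rewrite -!cats1 subseq_cat2r s's.2.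
have wB : {subset w <= B} by move=> t /(mem_subseq wu) /uB.
have szw' : size w <= c + q.+1 by rewrite -addSnnS.
have [x [y [-> xsa szx yu2 szy]]] := arch_subseq_split Bas arch_u2 wB szw' wu.
rewrite -cat_rcons; apply: cat_subseq; last by rewrite (v2u2.1 y szy).
by rewrite -cats1; apply: (simn_subseq_catl s's.1); rewrite ?cats1.
Qed.

End Shortening.

Lemma short_lesimn (T : eqType) k (B u : seq T) n : size B <= k ->
  {subset u <= B} -> exists2 v, lesimn n v u & size v <= f_ext k n.
Proof.
elim: k B u n => [|k IHk] B u n szB uB.
  move: szB; rewrite leqn0 size_eq0 => /eqP B0.
  case: u uB => [|t u] uB; first by exists [::]; [exact: lesimn_refl|].
  by have := uB t (mem_head _ _); rewrite B0.
have [c [cn arch_c maxc]] := arches_max B u n.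
have [v vu szv] := arches_short IHk (q := n - c) szB arch_c uB maxc.
exists v; first by rewrite subnKC in vu.
by apply: leq_trans szv _; rewrite -subSn //; apply: f_ext_max.
Qed.

Theorem theorem6 (A : finType) (u : seq A) (n : nat) :
  0 < #|A| ->
  exists v : seq A, lesimn n v u /\ size v <= f #|A| n.
Proof.
move=> A0.
have [v vu szv] := @short_lesimn A #|A| (enum A) u n
  (eq_leq (esym (cardE A))) (fun t _ => mem_enum A t).
by exists v; rewrite /f -f_ext_fk prednK.
Qed.
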